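(* Let $m$ be a non-negative integer, let $A$ and $D$ be two $k$-tuples of elements of $\mathbb{Z}/m\mathbb{Z}$, and let $p_1,p_2$ be positive integers with $k\mid p_1$. Then the orbit of $S=\mathrm{IAP}(A,D)$ is $(p_1,p_2)$-periodic if and only if $\pi_{m/\gcd(p_1/k,m)}(D)=0$ and the $1\times 2k$ block row $(A\mid D)$ lies in $\mathrm{Lker}_m\,P$, where $$P=\begin{pmatrix} W & 0_k\\ T_k^{(p_2)} & W\end{pmatrix},\qquad W=C_k^{(p_2)}+(-1)^{p_2+1}I_k .$$
   Context: $\mathbb{Z}/0\mathbb{Z}=\mathbb{Z}$. For $d\mid m$, $\pi_d$ is reduction from $\mathbb{Z}/m\mathbb{Z}$ to $\mathbb{Z}/d\mathbb{Z}$, applied entrywise. For $k$-tuples $A=(a_0,\dots,a_{k-1})$, $D=(d_0,\dots,d_{k-1})$, $\mathrm{IAP}(A,D)$ is the sequence $(u_j)_{j\in\mathbb{Z}}$ with $u_{qk+r}=a_r+qd_r$ ($q\in\mathbb{Z}$, $0\le r\le k-1$). The orbit of a sequence $(u_j)_{j\in\mathbb{Z}}$ is $(a_{i,j})_{(i,j)\in\mathbb{N}\times\mathbb{Z}}$ with $a_{0,j}=u_j$, $a_{i,j}=-a_{i-1,j}-a_{i-1,j+1}$ for $i\ge1$; it is $(p,q)$-periodic if $a_{i+q,j}=a_{i,j+p}=a_{i,j}$ for all $(i,j)$. $C_k^{(i)}$ is the $k\times k$ integer matrix $\big(\sum_{\alpha\in\mathbb{Z}}\binom{i}{\alpha k+r-s}\big)_{1\le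 r,s\le k}$ and $T_k^{(i)}=\big(\sum_{\alpha\in\mathbb{Z}}\alpha\binom{i}{\alpha k+r-s}\big)_{1\le r,s\le k}$, where $\binom{a}{b}=0$ if $b<0$ or $b>a$. For an $n_1\times n_2$ integer matrix $M$, $\mathrm{Lker}_m M=\{X\in(\mathbb{Z}/m\mathbb{Z})^{n_1}: X\,\pi_m(M)=0\}$ (row vectors). *)

From HB Require Import structures.
From mathcomp Require Import all_boot all_order all_algebra.
Set Implicit Arguments. Unset Strict Implicit. Unset Printing Implicit Defensive.
Import Order.TTheory GRing.Theory Num.Theory.
Local Open Scope ring_scope.

(* Elements of Z/mZ are represented by integer representatives; equality in
   Z/mZ is congruence modulo m (for m = 0 this is equality in Z, matching
   Z/0Z = Z, since (x %% 0)%Z = x). *)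

Definition binomZ (i : nat) (b : int) : int :=
  match b with Posz n => ('C(i, n))%:Z | Negz _ => 0 end.

(* C_k^(i) with 0-based indices r,s (differences r - s are unchanged).
   The sum over alpha in Z only has nonzero terms for 0 <= alpha <= i
   (as 0 <= r, s < k and k >= 1), so we sum over that range. *)
Definition Cmat (k i : nat) : 'M[int]_k :=
  \matrix_(r < k, s < k)
    \sum_(0 <= a < i.+1) binomZ i (a%:Z * k%:Z + r%:Z - s%:Z).

Definition Tmat (k i : nat) : 'M[int]_k :=
  \matrix_(r < k, s < k)
    \sum_(0 <= a < i.+1) a%:Z * binomZ i (a%:Z * k%:Z + r%:Z - s%:Z).

(* IAP(A,D): u_{qk+r} = a_r + q d_r  (q in Z, 0 <= r < k) *)
Definition IAP (k : nat) (A D : k.-tuple int) (j : int) : int :=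
  let r := absz (j %% k%:Z)%Z in
  nth 0 A r + (j %/ k%:Z)%Z * nth 0 D r.

Fixpoint orbit (u : int -> int) (i : nat) (j : int) : int :=
  match i with
  | 0%N => u j
  | i'.+1 => - orbit u i' j - orbit u i' (j + 1)
  end.

Definition periodic_mod (m : nat) (u : int -> int) (p q : nat) : Prop :=
  forall (i : nat) (j : int),
    (orbit u (i + q) j = orbit u i j %[mod m%:Z])%Z /\
    (orbit u i (j + p%:Z) = orbit u i j %[mod m%:Z])%Z.

Definition in_Lker (m : nat) (n1 n2 : nat) (X : 'rV[int]_n1) (M : 'M[int]_(n1, n2)) : Prop :=
  forall j : 'I_n2, ((X *m M) ord0 j = 0 %[mod m%:Z])%Z.

Definition tuple_row (k : nat) (A : k.-tuple int) : 'rV[int]_k := \row_(i < k) tnth A i.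

Definition Pmat (k p2 : nat) : 'M[int]_(k + k) :=
  let W := Cmat k p2 + ((-1) ^+ p2.+1)%:M in
  block_mx W 0 (Tmat k p2) W.

From Pilot Require Import Defs.
From mathcomp Require Import all_boot all_order all_algebra.
From mathcomp Require Import zify ring.
Import Order.TTheory GRing.Theory Num.Theory.
Local Open Scope ring_scope.
Local Notation orbit := Defs.orbit.

(* Row q of the orbit of u is j |-> (-1)^q sum_t C(q,t) u(j+t).  For u = IAP(A,D)
   and j = Qk + s this is affine in Q, with constant term and slope read off
   from A C_k^(q) + D T_k^(q) and D C_k^(q); so a_{q,j} = a_{0,j} for all j
   says exactly that (A | D) P vanishes mod m.  Since u(j + p1) - u(j) =
   (p1/k) d_r, horizontal periodicity of row 0 says m | (p1/k) d_r for all r.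
   Finally, the orbit of a sequence depends only on its class mod m and
   commutes with shifts, so periodicity of the whole orbit reduces to these
   two conditions on row 0. *)

Lemma eqz_mod_dvdP (d a b : int) : (a = b %[mod d])%Z <-> (d %| a - b)%Z.
Proof. by rewrite -eqz_mod_dvd; split => [->|/eqP]. Qed.

Lemma dvdn_mull_divgcd (m c n : nat) : (0 < c)%N ->
  (m %| c * n)%N = (m %/ gcdn c m %| n)%N.
Proof.
move=> c_gt0; set g := gcdn c m.
have g_gt0 : (0 < g)%N by rewrite gcdn_gt0 c_gt0.
have Em : m = (m %/ g * g)%N by rewrite divnK // dvdn_gcdr.
have Ec : c = (c %/ g * g)%N by rewrite divnK // dvdn_gcdl.
have cop : coprime (m %/ g) (c %/ g).
  by rewrite /coprime -(eqn_pmul2r g_gt0) mul1n muln_gcdl -Em -Ec gcdnC.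
by rewrite {1}Em {1}Ec mulnAC dvdn_pmul2r // Gauss_dvdr.
Qed.

Lemma int_ord_decomp {k : nat} (j : int) : (0 < k)%N ->
  exists Q (s : 'I_k), j = Q * k%:Z + s%:Z.
Proof.
move=> k_gt0; have k_neq0 : k%:Z != 0 by rewrite eqz_nat -lt0n.
have s_ge0 : (0 <= j %% k%:Z)%Z by rewrite modz_ge0.
have s_lt : (absz (j %% k%:Z)%Z < k)%N by rewrite -ltz_nat gez0_abs // ltz_pmod.
by exists (j %/ k%:Z)%Z, (Ordinal s_lt); rewrite /= gez0_abs // -divz_eq.
Qed.

Section Orbit.

Implicit Types (u v : int -> int) (d : int).

Lemma orbitD u i n j : orbit u (i + n) j = orbit (orbit u n) i j.
Proof. by elim: i j => [|i IH] j; rewrite ?add0n // addSn /= !IH. Qed.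

Lemma orbit_shift u c i j : orbit (fun x => u (x + c)) i j = orbit u i (j + c).
Proof. by elim: i j => [|i IH] j //=; rewrite !IH addrAC. Qed.

Lemma orbit_congr d u v : (forall j, (u j = v j %[mod d])%Z) ->
  forall i j, (orbit u i j = orbit v i j %[mod d])%Z.
Proof.
move=> uv; elim=> [|i IH] j; first exact: uv.
apply/eqz_mod_dvdP; have /eqz_mod_dvdP dj := IH j; have /eqz_mod_dvdP dj1 := IH (j + 1).
have -> : orbit u i.+1 j - orbit v i.+1 j =
  - ((orbit u i j - orbit v i j) + (orbit u i (j + 1) - orbit v i (j + 1))).
  by rewrite /=; ring.
by rewrite rpredN rpredD.
Qed.

Lemma periodic_modE m u p q : periodic_mod m u p q <->
  (forall j, (orbit u q j = u j %[mod m%:Z])%Z) /\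
  (forall j, (u (j + p%:Z) = u j %[mod m%:Z])%Z).
Proof.
split=> [per | [vert hor] i j].
  by split=> j; [have := (per 0%N j).1; rewrite add0n | exact: (per 0%N j).2].
split; first by rewrite orbitD; apply: orbit_congr.
by rewrite -orbit_shift; apply: orbit_congr.
Qed.

Lemma orbit_binomial u i j :
  orbit u i j = (-1) ^+ i * \sum_(0 <= t < i.+1) ('C(i, t))%:Z * u (j + t%:Z).
Proof.
elim: i j => [|i IH] j /=; first by rewrite big_nat1 expr0 bin0 addr0 !mul1r.
rewrite !IH exprS.
have -> : \sum_(0 <= t < i.+2) ('C(i.+1, t))%:Z * u (j + t%:Z) =
    \sum_(0 <= t < i.+1) ('C(i, t))%:Z * u (j + t%:Z) +
    \sum_(0 <= t < i.+1) ('C(i, t))%:Z * u (j + 1 + t%:Z).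
  rewrite big_nat_recl // [in X in _ = X + _]big_nat_recl // !bin0.
  under eq_bigr => t _ do rewrite binS PoszD mulrDl intS addrA.
  rewrite big_split /= [X in _ + (X + _) = _]big_nat_recr //= bin_small //.
  under [in RHS]eq_bigr => t _ do rewrite intS addrA.
  by rewrite mul0r addr0; ring.
ring.
Qed.

End Orbit.

Section IAP.

Variables (k : nat) (A D : k.-tuple int).

Let AD := row_mx (tuple_row A) (tuple_row D).

Lemma IAP_at (Q : int) (s : 'I_k) :
  IAP A D (Q * k%:Z + s%:Z) = tnth A s + Q * tnth D s.
Proof.
have k_gt0 : (0 < k)%N by apply: leq_ltn_trans (ltn_ord s).
rewrite /IAP modzMDl divzMDl; last by rewrite eqz_nat -lt0n.
rewrite modz_nat divz_nat modn_small // divn_small // addr0 /=.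
by rewrite !(tnth_nth 0).
Qed.

Lemma binomZ_indicator q b : binomZ q b =
  \sum_(0 <= t < q.+1) (if b == t%:Z then ('C(q, t))%:Z else 0).
Proof.
case: b => [n|n] /=; last by rewrite big1.
have [n_le|n_gt] := ltnP n q.+1.
  rewrite (bigD1_seq n) ?mem_index_iota ?iota_uniq //= eqxx big1 ?addr0 //.
  by move=> t; rewrite eqz_nat eq_sym => /negbTE ->.
rewrite bin_small // big1_seq // => t; rewrite mem_index_iota eqz_nat => /andP[_ t_lt].
by case: eqP => // nt; move: t_lt; rewrite -nt ltnNge n_gt.
Qed.

Lemma shift_index_eq (a r s t : nat) : (r < k)%N ->
  (a%:Z * k%:Z + r%:Z - s%:Z == t%:Z) = ((r == (s + t) %% k) && (a == (s + t) %/ k))%N.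
Proof.
move=> r_lt; have k_gt0 : (0 < k)%N by apply: leq_ltn_trans r_lt.
rewrite subr_eq -!PoszM -!PoszD eqz_nat; apply/eqP/andP => [st_eq | [/eqP -> /eqP ->]].
  by rewrite addnC -st_eq modnMDl modn_small // divnMDl // divn_small // addn0.
by rewrite -divn_eq addnC.
Qed.

(* Each t in [0, q] is s + t = a k + r for exactly one pair (r, a). *)
Lemma binomial_sum_IAP q (Q : int) (s : 'I_k) :
  \sum_(0 <= t < q.+1) ('C(q, t))%:Z * IAP A D (Q * k%:Z + s%:Z + t%:Z) =
  \sum_(r < k) \sum_(0 <= a < q.+1)
     binomZ q (a%:Z * k%:Z + r%:Z - s%:Z) * (tnth A r + (Q + a%:Z) * tnth D r).
Proof.
have k_gt0 : (0 < k)%N by apply: leq_ltn_trans (ltn_ord s).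
under [RHS]eq_bigr => r _ do under eq_bigr => a _ do rewrite binomZ_indicator mulr_suml.
under [RHS]eq_bigr => r _ do rewrite exchange_big /=.
rewrite [RHS]exchange_big /=; apply: eq_big_seq => t; rewrite mem_index_iota => /andP[_ t_lt].
under [RHS]eq_bigr => r _ do under eq_bigr => a _ do rewrite shift_index_eq ?ltn_ord //.
have r0_lt : ((s + t) %% k < k)%N by rewrite ltn_mod.
have a0_lt : ((s + t) %/ k < q.+1)%N.
  by rewrite ltn_divLR // mulSn; have := leq_pmulr q k_gt0; have := ltn_ord s; lia.
rewrite (bigD1 (Ordinal r0_lt)) //= [X in _ = _ + X]big1 ?addr0; last first.
  move=> r r_neq; rewrite big1 // => a _.
  suff /negbTE -> : (nat_of_ord r != (s + t) %% k)%N by rewrite mul0r.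
  by apply: contra r_neq => /eqP r_eq; apply/eqP/val_inj.
rewrite eqxx (bigD1_seq ((s + t) %/ k)%N) ?mem_index_iota ?iota_uniq //= eqxx.
rewrite big1_seq ?addr0; last by move=> a /andP[/negbTE -> _]; rewrite mul0r.
have st_decomp : s%:Z + t%:Z = ((s + t) %/ k)%N%:Z * k%:Z + ((s + t) %% k)%N%:Z.
  by rewrite -PoszD -PoszM -PoszD -divn_eq.
by rewrite -addrA st_decomp addrA -mulrDl (IAP_at _ (Ordinal r0_lt)).
Qed.

Lemma orbit_IAP q (Q : int) (s : 'I_k) :
  orbit (IAP A D) q (Q * k%:Z + s%:Z) = (-1) ^+ q *
   ((tuple_row A *m Cmat k q) 0 s + Q * (tuple_row D *m Cmat k q) 0 s
    + (tuple_row D *m Tmat k q) 0 s).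
Proof.
rewrite orbit_binomial binomial_sum_IAP; congr (_ * _).
rewrite !mxE.
under [in RHS]eq_bigr => r _ do rewrite !mxE.
under [X in _ = _ + _ * X + _]eq_bigr => r _ do rewrite !mxE.
under [X in _ = _ + X]eq_bigr => r _ do rewrite !mxE.
rewrite mulr_sumr -!big_split /=; apply: eq_bigr => r _.
by rewrite !mulr_sumr -!big_split /=; apply: eq_bigr => a _; ring.
Qed.

Lemma orbit_IAP_sub q (Q : int) (s : 'I_k) :
  orbit (IAP A D) q (Q * k%:Z + s%:Z) - IAP A D (Q * k%:Z + s%:Z) =
  (-1) ^+ q * ((AD *m Pmat k q) ord0 (lshift k s) + Q * (AD *m Pmat k q) ord0 (rshift k s)).
Proof.
rewrite orbit_IAP IAP_at /AD /Pmat mul_row_block !mulmxDr !mul_mx_scalar mulmx0.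
rewrite add0r row_mxEl row_mxEr !mxE exprS mulN1r -signr_odd.
by case: (odd q); rewrite ?expr0 ?expr1; ring.
Qed.

Lemma IAP_vertical_period m q : (0 < k)%N ->
  (forall j, (orbit (IAP A D) q j = IAP A D j %[mod m%:Z])%Z) <-> in_Lker m AD (Pmat k q).
Proof.
have dvd_sign (x : int) : (m%:Z %| (-1) ^+ q * x)%Z = (m%:Z %| x)%Z.
  by rewrite !dvdzE abszM abszX /= exp1n mul1n.
move=> k_gt0; split=> [vert j | ker j].
  have dvd_at Q (s : 'I_k) :
      (m%:Z %| (AD *m Pmat k q) ord0 (lshift k s) + Q * (AD *m Pmat k q) ord0 (rshift k s))%Z.
    by rewrite -dvd_sign -orbit_IAP_sub; apply/eqz_mod_dvdP.
  rewrite -(splitK j); case: (split j) => s /=; apply/eqz_mod_dvdP; rewrite subr0.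
    by have := dvd_at 0 s; rewrite mul0r addr0.
  have := dvd_at 1 s; have := dvd_at 0 s.
  by rewrite mul0r addr0 mul1r => d0; rewrite (rpredDl _ d0).
have [Q [s ->]] := int_ord_decomp j k_gt0.
have /eqz_mod_dvdP := ker (lshift k s); have /eqz_mod_dvdP := ker (rshift k s).
rewrite !subr0 => dr dl; apply/eqz_mod_dvdP.
by rewrite orbit_IAP_sub dvd_sign rpredD ?dvdz_mull.
Qed.

Lemma IAP_horizontal_period m p : (0 < p)%N -> (k %| p)%N ->
  (forall j, (IAP A D (j + p%:Z) = IAP A D j %[mod m%:Z])%Z) <->
  (forall r : 'I_k, (tnth D r = 0 %[mod (m %/ gcdn (p %/ k) m)%N%:Z])%Z).
Proof.
move=> p_gt0 k_dvd_p; have k_gt0 := dvdn_gt0 p_gt0 k_dvd_p.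
set c := (p %/ k)%N; have c_gt0 : (0 < c)%N by rewrite divn_gt0 // dvdn_leq.
have step Q (s : 'I_k) :
    IAP A D (Q * k%:Z + s%:Z + p%:Z) - IAP A D (Q * k%:Z + s%:Z) = c%:Z * tnth D s.
  have -> : Q * k%:Z + s%:Z + p%:Z = (Q + c%:Z) * k%:Z + s%:Z.
    by rewrite -[in p%:Z](divnK k_dvd_p) -/c PoszM; ring.
  by rewrite !IAP_at; ring.
have dvdE (s : 'I_k) : (m%:Z %| c%:Z * tnth D s)%Z <->
    (tnth D s = 0 %[mod (m %/ gcdn c m)%N%:Z])%Z.
  by rewrite eqz_mod_dvdP subr0 !dvdzE abszM /= dvdn_mull_divgcd.
split=> [hor s | dD j].
  by apply/dvdE; have /eqz_mod_dvdP := hor (0 * k%:Z + s%:Z); rewrite step.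
have [Q [s ->]] := int_ord_decomp j k_gt0.
by apply/eqz_mod_dvdP; rewrite step; apply/dvdE.
Qed.

End IAP.

Theorem theorem5 (m k : nat) (A D : k.-tuple int) (p1 p2 : nat) :
  (0 < p1)%N -> (0 < p2)%N -> (k %| p1)%N ->
  (periodic_mod m (IAP A D) p1 p2 <->
   ((forall r : 'I_k,
       (tnth D r = 0 %[mod (m %/ gcdn (p1 %/ k) m)%N%:Z])%Z) /\
    in_Lker m (row_mx (tuple_row A) (tuple_row D)) (Pmat k p2))).
Proof.
move=> p1_gt0 _ k_dvd_p1.
rewrite periodic_modE IAP_vertical_period ?(dvdn_gt0 p1_gt0 k_dvd_p1) //.
by rewrite IAP_horizontal_period //; split=> -[].
Qed.
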